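(* Let $\Gamma$ be a countably infinite discrete group and let $\boldsymbol{a}$ be a measure preserving action of $\Gamma$. The following are equivalent: (1) every non-trivial factor of $\boldsymbol{a}$ is faithful; (2) every non-trivial normal subgroup of $\Gamma$ acts ergodically (under the restriction of $\boldsymbol{a}$).
   Context: A measure preserving action $\boldsymbol{a}=\Gamma\curvearrowright^a (X,\mu)$ consists of a standard Borel space $X$, a Borel probability measure $\mu$, and a Borel $\mu$-preserving action of $\Gamma$ on $X$. An action $\boldsymbol{b}=\Gamma\curvearrowright^b (Y,\nu)$ is a factor of $\boldsymbol{a}$ if there is a measurable $\pi:X\to Y$ with $\pi_*\mu=\nu$ and, for each $\gamma\in\Gamma$, $\pi(\gamma^a x)=\gamma^b\pi(x)$ for $\mu$-a.e. $x$. An action is non-trivial if its measure is not a point mass. The kernel of $\boldsymbol{b}$ is $\{\gamma\in\Gamma : \nu(\{y : \gamma^b y = y\})=1\}$; $\boldsymbol{b}$ is faithful if its kernel is $\{e\}$. A non-trivial subgroup is one different from $\{e\}$. *)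

From HB Require Import structures.
From mathcomp Require Import all_boot all_order all_algebra.
From mathcomp Require Import all_classical all_reals all_analysis.
Set Implicit Arguments. Unset Strict Implicit. Unset Printing Implicit Defensive.
Import Order.TTheory GRing.Theory Num.Theory.
Local Open Scope classical_set_scope.
Local Open Scope ring_scope.

Record is_group (G : Type) (mul : G -> G -> G) (one : G) (inv : G -> G) : Prop := {
  grp_assoc : forall x y z, mul x (mul y z) = mul (mul x y) z;
  grp_mul1g : forall x, mul one x = x;
  grp_mulg1 : forall x, mul x one = x;
  grp_mulVg : forall x, mul (inv x) x = one;
  grp_mulgV : forall x, mul x (inv x) = one }.

Definition countably_infinite (G : Type) : Prop :=
  exists f : nat -> G, bijective f.

Definition normal_subgroup (G : Type) (mul : G -> G -> G) (one : G)
  (inv : G -> G) (N : set G) : Prop :=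
  N one /\ (forall x y, N x -> N y -> N (mul x y)) /\ (forall x, N x -> N (inv x))
  /\ (forall g x, N x -> N (mul (mul g x) (inv g))).

(* Standard Borel space: Borel-isomorphic to a Borel subset of the reals
   (equivalently, of a Polish space, by Kuratowski's theorem): there is an
   injective measurable map to R sending measurable sets to Borel sets. *)
Definition standard_borel (R : realType) (d : measure_display)
  (X : measurableType d) : Prop :=
  exists f : X -> R, injective f /\ measurable_fun setT f /\
    (forall A : set X, measurable A -> measurable (f @` A)).

Definition mp_action (R : realType) (G : Type) (mul : G -> G -> G) (one : G)
  (d : measure_display) (X : measurableType d) (mu : probability X R)
  (a : G -> X -> X) : Prop :=
  (forall x, a one x = x) /\
  (forall g h x, a (mul g h) x = a g (a h x)) /\
  (forall g, measurable_fun setT (a g)) /\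
  (forall g (A : set X), measurable A -> mu (a g @^-1` A) = mu A).

Definition is_factor (R : realType) (G : Type)
  (d : measure_display) (X : measurableType d) (mu : probability X R)
  (a : G -> X -> X)
  (d' : measure_display) (Y : measurableType d') (nu : probability Y R)
  (b : G -> Y -> Y) : Prop :=
  exists pi : X -> Y, measurable_fun setT pi /\
    (forall B : set Y, measurable B -> nu B = mu (pi @^-1` B)) /\
    (forall g, {ae mu, forall x, pi (a g x) = b g (pi x)}).

Definition nontrivial_measure (R : realType) (d : measure_display)
  (Y : measurableType d) (nu : probability Y R) : Prop :=
  ~ exists y : Y, forall B : set Y, measurable B -> nu B = \d_y B.

Definition action_kernel (R : realType) (G : Type) (d : measure_display)
  (Y : measurableType d) (nu : probability Y R) (b : G -> Y -> Y) : set G :=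
  [set g | {ae nu, forall y, b g y = y}].

Definition faithful (R : realType) (G : Type) (one : G) (d : measure_display)
  (Y : measurableType d) (nu : probability Y R) (b : G -> Y -> Y) : Prop :=
  action_kernel nu b = [set one].

Definition ergodic_on (R : realType) (G : Type) (d : measure_display)
  (X : measurableType d) (mu : probability X R) (a : G -> X -> X)
  (N : set G) : Prop :=
  forall A : set X, measurable A -> (forall g, N g -> a g @^-1` A = A) ->
    mu A = 0%E \/ mu A = 1%E.

From HB Require Import structures.
From mathcomp Require Import all_boot all_order all_algebra.
From mathcomp Require Import all_classical all_reals all_analysis.
From mathcomp Require Import measurable_realfun.
From mathcomp Require Import ring.
Set Implicit Arguments. Unset Strict Implicit. Unset Printing Implicit Defensive.
Import Order.TTheory GRing.Theory Num.Theory.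
Local Open Scope classical_set_scope.
Local Open Scope ring_scope.

(* (1) -> (2): if a non-trivial normal subgroup N had an invariant set A with
   0 < mu A < 1, the map x |-> (1_A (g^-1 x))_g into the Bernoulli shift 2^G, coded into
   R by a ternary expansion, would be a non-trivial factor on which N acts trivially.
   (2) -> (1): the kernel K of a factor is normal. If K were non-trivial it would act
   ergodically, and the preimage of any measurable set of the factor is K-invariant up to
   null sets, hence null or conull; so the factor measure takes only the values 0 and 1,
   and such a measure on a standard Borel space is a point mass. *)

Section GroupTheory.
Context (G : Type) (mul : G -> G -> G) (one : G) (inv : G -> G).
Hypothesis HG : is_group mul one inv.

Lemma inv_uniq x y : mul x y = one -> x = inv y.
Proof.
by move=> xy1; rewrite -[x](grp_mulg1 HG) -(grp_mulgV HG y) (grp_assoc HG) xy1 (grp_mul1g HG).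
Qed.

Lemma inv1 : inv one = one.
Proof. by apply/esym/inv_uniq; rewrite (grp_mul1g HG). Qed.

Lemma invK x : inv (inv x) = x.
Proof. by apply/esym/inv_uniq; rewrite (grp_mulgV HG). Qed.

Lemma invM x y : inv (mul x y) = mul (inv y) (inv x).
Proof.
apply/esym/inv_uniq.
by rewrite -(grp_assoc HG) (grp_assoc HG (inv x)) (grp_mulVg HG) (grp_mul1g HG) (grp_mulVg HG).
Qed.

End GroupTheory.

Section CantorCoding.
Variable R : realType.

Definition cantor_weight (k : nat) : R := (3^-1) ^+ k.

Let w := cantor_weight.

Definition cantor_term (s : nat -> bool) k : \bar R := ((s k)%:R * w k)%:E.

Definition cantor_tail (s : nat -> bool) m : \bar R :=
  (\sum_(m <= j <oo) cantor_term s j)%E.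

Definition cantor_encode s : R := fine (cantor_tail s 0).

Fixpoint cantor_rem (r : R) k : R :=
  match k with
  | 0 => r
  | k.+1 => if w k <= cantor_rem r k then cantor_rem r k - w k else cantor_rem r k
  end.

Definition cantor_decode (r : R) k : bool := w k <= cantor_rem r k.

Lemma cantor_weight_gt0 k : 0 < w k.
Proof. by rewrite /w /cantor_weight exprn_gt0// invr_gt0. Qed.

Lemma cantor_term_ge0 s k : (0 <= cantor_term s k)%E.
Proof. by rewrite lee_fin mulr_ge0// ltW// cantor_weight_gt0. Qed.

Lemma cantor_weight_sum_le m n : \sum_(m <= j < n) w j <= w m * (3/2).
Proof.
have [nm|mn] := leqP n m; first by rewrite big_geq// mulr_ge0// ltW// cantor_weight_gt0.
rewrite -(subnKC (ltnW mn)) /w /cantor_weight geometric_partial_tail geometric_seriesE;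
  last by rewrite lt_eqF// invf_lt1// ltr1n.
have -> : (1 - 3^-1 : R) = 2/3 by field.
rewrite /= invf_div -mulrA ler_pM2l ?exprn_gt0 ?invr_gt0//.
by rewrite -[leRHS]mul1r ler_pM2r// lerBlDr lerDl exprn_ge0// invr_ge0.
Qed.

Lemma cantor_tail_ge0 s m : (0 <= cantor_tail s m)%E.
Proof. by apply: nneseries_ge0 => n _ _; exact: cantor_term_ge0. Qed.

Lemma cantor_tail_le s m : (cantor_tail s m <= (w m * (3/2))%:E)%E.
Proof.
apply: lime_le; first by apply: is_cvg_ereal_nneg_natsum => n _; exact: cantor_term_ge0.
apply: nearW => n; rewrite sumEFin lee_fin (le_trans _ (cantor_weight_sum_le m n))//.
by apply: ler_sum => i _; case: (s i); rewrite ?mul1r ?mul0r// ltW// cantor_weight_gt0.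
Qed.

Lemma cantor_tail_fin s m : cantor_tail s m \is a fin_num.
Proof.
by rewrite ge0_fin_numE ?cantor_tail_ge0// (le_lt_trans (cantor_tail_le s m)) ?ltry.
Qed.

Lemma cantor_tailS s m :
  fine (cantor_tail s m) = (s m)%:R * w m + fine (cantor_tail s m.+1).
Proof.
rewrite /cantor_tail (nneseries_split _ 1); last by move=> k _; exact: cantor_term_ge0.
rewrite addn1 big_nat1 fineD// -/(cantor_tail s m.+1); exact: cantor_tail_fin.
Qed.

(* Base 3 leaves room: the tail after digit [m] is at most [w m / 2], so greedy
   decoding by [cantor_rem] recovers every digit. *)
Lemma cantor_tailS_bounds s m :
  0 <= fine (cantor_tail s m.+1) < w m.
Proof.
rewrite fine_ge0 ?cantor_tail_ge0//=.
have := cantor_tail_le s m.+1; rewrite -(fineK (cantor_tail_fin s m.+1)) lee_fin.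
move/le_lt_trans; apply.
have -> : w m.+1 * (3/2) = w m / 2 by rewrite /w /cantor_weight exprSr; field.
by rewrite ltr_pdivrMr// ltr_pMr ?cantor_weight_gt0// ltr1n.
Qed.

Lemma cantor_rem_encode s k : cantor_rem (cantor_encode s) k = fine (cantor_tail s k).
Proof.
elim: k => [//|k IH] /=; rewrite IH cantor_tailS.
have /andP[t0 t1] := cantor_tailS_bounds s k.
case: (s k); rewrite ?mul1r ?mul0r ?add0r.
  by rewrite lerDl t0 addrAC subrr add0r.
by rewrite leNgt t1.
Qed.

Lemma cantor_decode_encode s : cantor_decode (cantor_encode s) = s.
Proof.
apply/funext => k; rewrite /cantor_decode cantor_rem_encode cantor_tailS.
have /andP[t0 t1] := cantor_tailS_bounds s k.
by case: (s k); rewrite ?mul1r ?mul0r ?add0r ?lerDl// leNgt t1.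
Qed.

Lemma measurable_cantor_encode d (T : measurableType d) (s : T -> nat -> bool) :
  (forall k, measurable_fun setT (s ^~ k)) ->
  measurable_fun setT (fun t => cantor_encode (s t)).
Proof.
move=> ms; apply: (measurableT_comp (f := fine)) => //.
have -> : (fun t => cantor_tail (s t) 0) =
    (fun t => (\sum_(i <oo | i \in xpredT) (fun k t => cantor_term (s t) k) i t)%E).
  by apply/funext => t; apply: eq_eseriesr.
apply: ge0_emeasurable_sum => [k x _ _|k _]; first exact: cantor_term_ge0.
apply/measurable_EFinP.
have -> : (fun t => (s t k)%:R * w k) = (fun t => if s t k then w k else 0).
  by apply/funext => t; case: (s t k); rewrite ?mul1r ?mul0r.
exact: measurable_fun_ifT.
Qed.

Lemma measurable_cantor_rem k : measurable_fun setT (cantor_rem ^~ k).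
Proof.
elim: k => [|k IH] /=; first exact: measurable_id.
by apply: measurable_fun_ifT => //; [exact: measurable_fun_ler | exact: measurable_funB].
Qed.

Lemma measurable_cantor_decode k : measurable_fun setT (cantor_decode ^~ k).
Proof. by apply: measurable_fun_ler => //; exact: measurable_cantor_rem. Qed.

End CantorCoding.

Lemma measurableT_preimage d d' (T : measurableType d) (U : measurableType d')
  (f : T -> U) (B : set U) :
  measurable_fun setT f -> measurable B -> measurable (f @^-1` B).
Proof. by move=> mf mB; rewrite -[_ @^-1` _]setTI; exact: mf. Qed.

Lemma exists_natSinv_addr_lt (R : archiRealFieldType) (x y : R) :
  x < y -> exists n : nat, x + n.+1%:R^-1 < y.
Proof.
rewrite -subr_gt0 => yx; exists (Num.truncn (y - x)^-1); rewrite -ltrBrDl.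
by rewrite -ltf_pV2 ?posrE ?invr_gt0// invrK truncnS_gt.
Qed.

Section ZeroOneMeasure.
Context (R : realType) (d : measure_display) (Y : measurableType d).
Variable nu : probability Y R.

Lemma not_negligibleT : ~ nu.-negligible [set: Y].
Proof.
move/(negligibleP nu measurableT) => nuT0.
by have := probability_setT nu; rewrite nuT0 => /eqP; rewrite eq_sym onee_eq0.
Qed.

Lemma probability1_negligibleC C : measurable C -> nu C = 1%E -> nu.-negligible (~` C).
Proof.
move=> mC nuC1; apply/(negligibleP nu (measurableC mC)).
by have := probability_setC nu mC; rewrite nuC1 subee.
Qed.

Hypothesis nu01 : forall B, measurable B -> nu B = 0%E \/ nu B = 1%E.

Lemma zero_one_negligibleC C : measurable C -> nu.-negligible (~` C) -> nu C = 1%E.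
Proof.
move=> mC nCneg; case: (nu01 mC) => // /(negligibleP nu mC) Cneg.
exfalso; apply: not_negligibleT; rewrite -(setUv C); exact: negligibleU.
Qed.

Section Threshold.
Variable f : Y -> R.
Hypothesis mf : measurable_fun setT f.

Let L t := f @^-1` `]-oo, t].

Let mL t : measurable (L t).
Proof. exact: measurableT_preimage. Qed.

Let nu_L_le t t' : t <= t' -> (nu (L t) <= nu (L t'))%E.
Proof.
move=> tt'; apply: le_measure; rewrite ?inE// => y; rewrite /L /= !in_itv /=.
by move/le_trans; apply.
Qed.

Lemma zero_one_threshold :
  exists s, (forall t, t < s -> nu (L t) = 0%E) /\ (forall t, s < t -> nu (L t) = 1%E).
Proof.
pose S := [set t | nu (L t) = 0%E].
have [t0 St0] : exists t, S t.
  apply: contrapT => noS; apply: not_negligibleT.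
  have -> : [set: Y] = \bigcup_n ~` L (- n%:R).
    apply/seteqP; split => // y _; exists (Num.truncn (- f y)).+1 => //=.
    by rewrite /L /= in_itv /=; apply/negP; rewrite -ltNge ltrNl truncnS_gt.
  apply: negligible_bigcup => n; apply: probability1_negligibleC => //.
  by case: (nu01 (mL (- n%:R))) => // nuL0; exfalso; apply: noS; exists (- n%:R).
have [n0 nuLn0] : exists n : nat, nu (L n%:R) = 1%E.
  apply: contrapT => noL1; apply: not_negligibleT.
  have -> : [set: Y] = \bigcup_n L n%:R.
    apply/seteqP; split => // y _; exists (Num.truncn (f y)).+1 => //=.
    by rewrite /L /= in_itv /= ltW// truncnS_gt.
  apply: negligible_bigcup => n; apply/(negligibleP nu (mL _)).
  by case: (nu01 (mL n%:R)) => // nuL1; exfalso; apply: noL1; exists n.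
have S_ub : ubound S n0%:R.
  move=> t St; rewrite leNgt; apply/negP => /ltW/nu_L_le.
  by rewrite nuLn0 St lee_fin ler10.
have supS : has_sup S by split; [exists t0 | exists n0%:R].
exists (sup S); split => t ts.
- have [u Su tu] : exists2 u, S u & t < u.
    have tS : 0 < sup S - t by rewrite subr_gt0.
    have [u Su] := sup_adherent tS supS.
    by rewrite opprB addrC subrK; exists u.
  apply/eqP; rewrite eq_le measure_ge0 andbT -Su; exact/nu_L_le/ltW.
- case: (nu01 (mL t)) => // St; exfalso.
  by have := sup_upper_bound supS St; rewrite leNgt ts.
Qed.

Lemma zero_one_ae_const : exists s, nu.-negligible [set y | f y != s].
Proof.
have [s [nu_lo nu_hi]] := zero_one_threshold; exists s.
have cover : [set y | f y != s] `<=`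
    (\bigcup_n L (s - n.+1%:R^-1)) `|` (\bigcup_n ~` L (s + n.+1%:R^-1)).
  move=> y /=; rewrite neq_lt => /orP[fys|sfy].
  - have [n ns] := exists_natSinv_addr_lt fys.
    by left; exists n => //; rewrite /L /= in_itv /= lerBrDr ltW.
  - have [n ns] := exists_natSinv_addr_lt sfy.
    by right; exists n => //; rewrite /L /= in_itv /=; apply/negP; rewrite -ltNge.
apply: (negligibleS cover); apply: negligibleU; apply: negligible_bigcup => n.
- by apply/(negligibleP nu (mL _))/nu_lo; rewrite ltrBlDr ltrDl invr_gt0.
- by apply/probability1_negligibleC/nu_hi => //; rewrite ltrDl invr_gt0.
Qed.

End Threshold.

Lemma zero_one_dirac (f : Y -> R) : injective f -> measurable_fun setT f ->
  exists y, forall B, measurable B -> nu B = \d_y B.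
Proof.
move=> finj mf; have [s fs_neg] := zero_one_ae_const mf.
have [y fys] : exists y, f y = s.
  apply: contrapT => nos; apply: not_negligibleT; apply: negligibleS fs_neg => z _.
  by apply/eqP => fzs; apply: nos; exists z.
exists y => B mB; rewrite diracE.
have [yB|yB] := pselect (B y).
- rewrite mem_set//; apply: zero_one_negligibleC => //; apply: negligibleS fs_neg.
  by move=> z /= zB; apply/eqP => fzs; apply: zB; rewrite (finj z y)// fys.
- rewrite memNset//; apply/(negligibleP nu mB); apply: negligibleS fs_neg.
  by move=> z /= zB; apply/eqP => fzs; apply: yB; rewrite -(finj z y)// fys.
Qed.

End ZeroOneMeasure.

Lemma ae_comp_pushforward (R : realType) d d' (X : measurableType d) (Y : measurableType d')
  (mu : {measure set X -> \bar R}) (nu : {measure set Y -> \bar R}) (pi : X -> Y) :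
  measurable_fun setT pi -> (forall B, measurable B -> nu B = mu (pi @^-1` B)) ->
  forall P : Y -> Prop, {ae nu, forall y, P y} -> {ae mu, forall x, P (pi x)}.
Proof.
move=> mpi nu_pi P [M [mM nuM0 notPM]]; exists (pi @^-1` M); split.
- exact: measurableT_preimage.
- by rewrite -nu_pi.
- by move=> x /= /notPM.
Qed.

Section ActionKernel.
Context (R : realType) (G : Type) (mul : G -> G -> G) (one : G) (inv : G -> G).
Hypothesis HG : is_group mul one inv.
Context (d : measure_display) (Y : measurableType d) (nu : probability Y R) (b : G -> Y -> Y).
Hypothesis Hb : mp_action mul one nu b.

Let ae_act g (P : Y -> Prop) : {ae nu, forall y, P y} -> {ae nu, forall y, P (b g y)}.
Proof.
have [_ [_ [bm bmp]]] := Hb.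
have nu_b B : measurable B -> nu B = nu (b g @^-1` B) by move=> mB; rewrite bmp.
exact: (ae_comp_pushforward (bm g) nu_b).
Qed.

Lemma action_kernel1 : action_kernel nu b one.
Proof. by case: Hb => b1 _; apply: aeW => y; rewrite b1. Qed.

Lemma action_kernel_normal : normal_subgroup mul one inv (action_kernel nu b).
Proof.
have [b1 [bM _]] := Hb.
split; first exact: action_kernel1.
split; [|split].
- move=> g h Kg Kh; apply: filterS2 Kh (ae_act h Kg) => y bhy bgbhy.
  by rewrite bM bgbhy bhy.
- move=> g Kg; apply: filterS (ae_act (inv g) Kg) => y bg.
  by rewrite -bg -bM (grp_mulgV HG) b1.
- move=> g h Kh; apply: filterS (ae_act (inv g) Kh) => y bh.
  by rewrite !bM bh -bM (grp_mulgV HG) b1.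
Qed.

End ActionKernel.

Section AeInvariantSets.
Context (R : realType) (G : Type) (mul : G -> G -> G) (one : G) (inv : G -> G).
Hypothesis HG : is_group mul one inv.
Context (e : nat -> G) (ei : G -> nat) (eiK : cancel ei e).
Context (d : measure_display) (X : measurableType d) (mu : probability X R) (a : G -> X -> X).
Hypothesis Ha : mp_action mul one mu a.
Context (K : set G) (HK : normal_subgroup mul one inv K).

(* [A] is the intersection of the translates [a k @^-1` P], [k \in K]; it is measurable
   because [G] is countable, and differs from [P] by a null set. *)
Lemma ae_invariant_strict (P : set X) : measurable P ->
  (forall k, K k -> {ae mu, forall x, P x -> P (a k x)}) ->
  exists2 A, measurable A /\ (forall k, K k -> a k @^-1` A = A) & mu A = mu P.
Proof.
have [a1 [aM [am _]]] := Ha; have [K1 [KM [KV _]]] := HK.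
move=> mP aeP; pose D := [set n | K (e n)].
have [Z [mZ Z0 PZ]] : {ae mu, forall x n, D n -> P x -> P (a (e n) x)}.
  apply: ae_foralln => n; have [Kn|Kn] := pselect (D n).
    by apply: filterS (aeP _ Kn) => x Pax _.
  by apply: aeW => x /Kn.
pose A := \bigcap_(n in D) a (e n) @^-1` P.
have mA : measurable A.
  apply: bigcap_measurable; first by exists (ei one); rewrite /D /= eiK.
  by move=> n _; exact: measurableT_preimage.
have Ainv k : K k -> a k @^-1` A = A.
  move=> Kk; apply/seteqP; split => x /= Ax n Dn.
  - have := Ax (ei (mul (e n) (inv k))); rewrite /D /= eiK -aM -(grp_assoc HG).
    by rewrite (grp_mulVg HG) (grp_mulg1 HG); apply; apply: KM => //; exact: KV.
  - by rewrite /= -aM; have := Ax (ei (mul (e n) k)); rewrite /D /= eiK; apply; exact: KM.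
exists A => //.
have AP : A `<=` P by move=> x Ax; have := Ax (ei one); rewrite /D /= eiK a1; exact.
have PAZ : P `<=` A `|` Z.
  move=> x Px; have [Zx|nZx] := pselect (Z x); [by right | left => n Dn /=].
  by apply: contrapT => nPax; apply: nZx; apply: PZ => /(_ n Dn Px).
apply/eqP; rewrite eq_le le_measure ?inE//=.
apply: (le_trans (le_measure _ _ _ PAZ)); rewrite ?inE//; first exact: measurableU.
apply: (le_trans (measureU2 mu mA mZ)).
by change (mu A + mu Z <= mu A)%E; rewrite Z0 adde0.
Qed.

Lemma ergodic_ae_invariant (P : set X) : ergodic_on mu a K -> measurable P ->
  (forall k, K k -> {ae mu, forall x, P x -> P (a k x)}) ->
  mu P = 0%E \/ mu P = 1%E.
Proof.
move=> erg mP /(ae_invariant_strict mP) [A [mA Ainv] <-].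
exact: erg.
Qed.

End AeInvariantSets.


Lemma nontrivial_measure_not01 (R : realType) d (Y : measurableType d)
    (nu : probability Y R) (B : set Y) :
  measurable B -> ~ (nu B = 0%E \/ nu B = 1%E) -> nontrivial_measure nu.
Proof.
move=> mB nuB01 [y nu_dirac]; apply: nuB01.
by rewrite nu_dirac// diracE; case: (y \in B); [right | left].
Qed.

Lemma standard_borel_realType (R : realType) : standard_borel R R.
Proof. by exists id; split; [exact: inj_id | split=> // B mB; rewrite image_id]. Qed.

Section PushforwardFactor.
Context (R : realType) (G : Type) (mul : G -> G -> G) (one : G).
Context (d : measure_display) (X : measurableType d) (mu : probability X R) (a : G -> X -> X).
Hypothesis Ha : mp_action mul one mu a.
Context (d' : measure_display) (Y : measurableType d').

Lemma pushforward_factor (pi : X -> Y) (b : G -> Y -> Y) :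
  measurable_fun setT pi -> (forall y, b one y = y) ->
  (forall g h y, b (mul g h) y = b g (b h y)) -> (forall g, measurable_fun setT (b g)) ->
  (forall g x, b g (pi x) = pi (a g x)) ->
  exists nu : probability Y R, (forall B, measurable B -> nu B = mu (pi @^-1` B)) /\
    mp_action mul one nu b /\ is_factor mu a nu b.
Proof.
move=> mpi b1 bM bm pi_equiv; have [_ [_ [_ amp]]] := Ha.
pose pim : {mfun X >-> Y} := HB.pack pi (isMeasurableFun.Build _ _ _ _ _ mpi).
exists (distribution mu pim); split=> //; split; last first.
  by exists pi; do 2!split=> //; move=> g; apply: aeW => x; rewrite pi_equiv.
do 3!split=> //; move=> g B mB.
change (mu (pi @^-1` (b g @^-1` B)) = mu (pi @^-1` B)).
have -> : pi @^-1` (b g @^-1` B) = a g @^-1` (pi @^-1` B).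
  by apply/seteqP; split => x /=; rewrite pi_equiv.
by rewrite amp//; exact: measurableT_preimage.
Qed.

End PushforwardFactor.

Section BernoulliShift.
Context (R : realType) (G : Type) (mul : G -> G -> G) (one : G) (inv : G -> G).
Hypothesis HG : is_group mul one inv.
Context (e : nat -> G) (ei : G -> nat) (eK : cancel e ei) (eiK : cancel ei e).

(* The left shift of [G] on [2^G], with [G] enumerated by [e]. *)
Definition bshift (g : G) (t : nat -> bool) : nat -> bool :=
  fun k => t (ei (mul (inv g) (e k))).

(* Reals outside the image of [cantor_encode] are fixed points. *)
Definition cantor_shift (g : G) (r : R) : R :=
  if cantor_encode R (cantor_decode r) == r
  then cantor_encode R (bshift g (cantor_decode r)) else r.

Lemma bshift1 t : bshift one t = t.
Proof. by apply/funext => k; rewrite /bshift (inv1 HG) (grp_mul1g HG) eK. Qed.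

Lemma bshiftM g h t : bshift (mul g h) t = bshift g (bshift h t).
Proof. by apply/funext => k; rewrite /bshift eiK (invM HG) (grp_assoc HG). Qed.

Lemma cantor_shift1 r : cantor_shift one r = r.
Proof. by rewrite /cantor_shift bshift1; case: eqP. Qed.

Lemma cantor_shiftM g h r : cantor_shift (mul g h) r = cantor_shift g (cantor_shift h r).
Proof.
rewrite /cantor_shift; case: eqP => [_|]; last by case: eqP.
by rewrite cantor_decode_encode eqxx bshiftM.
Qed.

Lemma cantor_shift_encode g t :
  cantor_shift g (cantor_encode R t) = cantor_encode R (bshift g t).
Proof. by rewrite /cantor_shift cantor_decode_encode eqxx. Qed.

Lemma measurable_cantor_shift g : measurable_fun setT (cantor_shift g).
Proof.
apply: measurable_fun_ifT; last exact: measurable_id.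
- apply: measurable_fun_eqr => //; apply: measurable_cantor_encode => k.
  exact: measurable_cantor_decode.
- by apply: measurable_cantor_encode => k; exact: measurable_cantor_decode.
Qed.

Context (d : measure_display) (X : measurableType d) (mu : probability X R) (a : G -> X -> X).
Hypothesis Ha : mp_action mul one mu a.

Definition itinerary (A : set X) (x : X) : nat -> bool :=
  fun k => `[< A (a (inv (e k)) x) >].

Lemma bshift_itinerary A g x : bshift g (itinerary A x) = itinerary A (a g x).
Proof.
have [_ [aM _]] := Ha.
by apply/funext => k; rewrite /bshift /itinerary eiK (invM HG) (invK HG) aM.
Qed.

Lemma itinerary_one A x : itinerary A x (ei one) = `[< A x >].
Proof. by have [a1 _] := Ha; rewrite /itinerary eiK (inv1 HG) a1. Qed.

Lemma measurable_itinerary_code A : measurable A ->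
  measurable_fun setT (fun x => cantor_encode R (itinerary A x)).
Proof.
have [_ [_ [am _]]] := Ha; move=> mA.
apply: measurable_cantor_encode => k; apply: (measurable_fun_bool true).
have -> : setT `&` (itinerary A ^~ k) @^-1` [set true] = a (inv (e k)) @^-1` A.
  by apply/seteqP; split => x /=; [case=> _ /asboolP | split=> //; exact/asboolP].
exact: measurableT_preimage.
Qed.

Lemma itinerary_normal_invariant (N : set G) A n x :
  normal_subgroup mul one inv N -> (forall g, N g -> a g @^-1` A = A) -> N n ->
  itinerary A (a n x) = itinerary A x.
Proof.
have [_ [aM _]] := Ha; move=> [_ [_ [_ Nconj]]] Ainv Nn.
apply/funext => k; rewrite /itinerary -aM.
pose n' := mul (mul (inv (e k)) n) (inv (inv (e k))).
have -> : mul (inv (e k)) n = mul n' (inv (e k)).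
  by rewrite /n' -(grp_assoc HG) (grp_mulVg HG) (grp_mulg1 HG).
by rewrite aM -[A (a n' _)]/((a n' @^-1` A) _) Ainv//; exact: Nconj.
Qed.

(* The factor is the image of [x |-> (1_A (g^-1 x))_g] in [2^G], coded into [R];
   the [N]-invariance of [A] and the normality of [N] make [N] act trivially on it. *)
Lemma itinerary_factor (N : set G) (A : set X) :
  normal_subgroup mul one inv N -> measurable A -> (forall g, N g -> a g @^-1` A = A) ->
  ~ (mu A = 0%E \/ mu A = 1%E) ->
  exists (nu : probability R R) (b : G -> R -> R),
    [/\ mp_action mul one nu b, is_factor mu a nu b, nontrivial_measure nu
      & N `<=` action_kernel nu b].
Proof.
move=> HN mA Ainv A01.
pose pi x := cantor_encode R (itinerary A x); pose b := cantor_shift.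
have pi_equiv g x : b g (pi x) = pi (a g x).
  by rewrite /b cantor_shift_encode bshift_itinerary.
have [nu [nuE [Hb fac]]] := pushforward_factor Ha (measurable_itinerary_code mA)
  cantor_shift1 cantor_shiftM measurable_cantor_shift pi_equiv.
exists nu, b; split=> // [|n Nn].
- have mB0 : measurable [set r : R | cantor_decode r (ei one)].
    exact: measurableT_preimage (measurable_cantor_decode _) _.
  apply: (nontrivial_measure_not01 mB0); rewrite nuE//.
  suff -> : pi @^-1` [set r | cantor_decode r (ei one)] = A by [].
  by apply/seteqP; split => x; rewrite /pi /= cantor_decode_encode itinerary_one => /asboolP.
- have mfix : measurable [set y | b n y == y].
    apply: (measurableT_preimage (f := fun y => b n y == y) (B := [set true])) => //.
    by apply: measurable_fun_eqr => //; exact: measurable_cantor_shift.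
  exists (~` [set y | b n y == y]); split; first exact: measurableC.
    rewrite nuE; last exact: measurableC.
    suff -> : pi @^-1` (~` [set y | b n y == y]) = set0 by exact: measure0.
    apply/seteqP; split => x //=.
    by rewrite pi_equiv /pi (itinerary_normal_invariant _ HN Ainv Nn) eqxx.
  by move=> y /= bny /eqP.
Qed.

End BernoulliShift.

Section FactorsAndNormalSubgroups.
Context (R : realType) (G : Type) (mul : G -> G -> G) (one : G) (inv : G -> G).
Hypothesis HG : is_group mul one inv.
Context (e : nat -> G) (ei : G -> nat) (eK : cancel e ei) (eiK : cancel ei e).
Context (d : measure_display) (X : measurableType d) (mu : probability X R) (a : G -> X -> X).
Hypothesis Ha : mp_action mul one mu a.

Lemma factor_zero_one (d' : measure_display) (Y : measurableType d')
    (nu : probability Y R) (b : G -> Y -> Y) :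
  mp_action mul one nu b -> is_factor mu a nu b ->
  ergodic_on mu a (action_kernel nu b) ->
  forall B, measurable B -> nu B = 0%E \/ nu B = 1%E.
Proof.
move=> Hb [pi [mpi [nu_pi pi_equiv]]] erg B mB; rewrite nu_pi //.
apply: (ergodic_ae_invariant HG eiK Ha (action_kernel_normal HG Hb) erg).
  exact: measurableT_preimage.
move=> k Kk; apply: filterS2 (pi_equiv k) (ae_comp_pushforward mpi nu_pi Kk).
by move=> x pi_ak bk_pi /=; rewrite pi_ak bk_pi.
Qed.

Lemma faithful_factors_of_ergodic_normal :
  (forall N, normal_subgroup mul one inv N -> N <> [set one] -> ergodic_on mu a N) ->
  forall (d' : measure_display) (Y : measurableType d') (nu : probability Y R)
    (b : G -> Y -> Y),
  standard_borel R Y -> mp_action mul one nu b ->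
  is_factor mu a nu b -> nontrivial_measure nu -> faithful one nu b.
Proof.
move=> ergN d' Y nu b [f [finj [mf _]]] Hb fac nontriv.
apply/seteqP; split => [g Kg | g ->]; last exact: (action_kernel1 Hb).
apply: contrapT => g1; apply: nontriv; apply: (zero_one_dirac _ finj mf).
apply: (factor_zero_one Hb fac); apply: ergN (action_kernel_normal HG Hb) _.
by move=> K1; apply: g1; rewrite K1 in Kg.
Qed.

Lemma ergodic_normal_of_faithful_factors :
  (forall (d' : measure_display) (Y : measurableType d') (nu : probability Y R)
     (b : G -> Y -> Y),
     standard_borel R Y -> mp_action mul one nu b ->
     is_factor mu a nu b -> nontrivial_measure nu -> faithful one nu b) ->
  forall N, normal_subgroup mul one inv N -> N <> [set one] -> ergodic_on mu a N.
Proof.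
move=> faith N HN Nnontriv A mA Ainv; apply: contrapT => A01.
have [nu [b [Hb fac nontriv NK]]] := itinerary_factor HG eK eiK Ha HN mA Ainv A01.
apply: Nnontriv; apply/seteqP; split=> [g Ng|g ->]; last by case: HN.
by rewrite -(faith _ _ _ _ (standard_borel_realType R) Hb fac nontriv); exact: NK.
Qed.

End FactorsAndNormalSubgroups.

Theorem proposition1p1 (R : realType) (G : Type) (mul : G -> G -> G) (one : G)
  (inv : G -> G) (HG : is_group mul one inv) (Hcount : countably_infinite G)
  (d : measure_display) (X : measurableType d) (mu : probability X R)
  (a : G -> X -> X) (HX : standard_borel R X) (Ha : mp_action mul one mu a) :
  (forall (d' : measure_display) (Y : measurableType d') (nu : probability Y R)
     (b : G -> Y -> Y),
     standard_borel R Y -> mp_action mul one nu b ->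
     is_factor mu a nu b -> nontrivial_measure nu -> faithful one nu b)
  <->
  (forall N : set G, normal_subgroup mul one inv N -> N <> [set one] ->
     ergodic_on mu a N).
Proof.
have [e [ei eK eiK]] := Hcount.
split.
- exact: (ergodic_normal_of_faithful_factors HG eK eiK Ha).
- exact: (faithful_factors_of_ergodic_normal HG eiK Ha).
Qed.
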